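(* Let $X_1,\ldots,X_k\in\mathbf{M}_{2N}(\mathbb{C})$ commute pairwise and satisfy $X_j^{*}=X_j^{\sharp}$ for all $j$. (1) There is a single symplectic unitary $U$ such that for all $j$, \[U^{*}X_jU=\begin{bmatrix}T_j & S_j\\ -\overline{S_j} & \overline{T_j}\end{bmatrix}\] with each $T_j$ upper-triangular and each $S_j$ strictly upper-triangular ($N\times N$ blocks). (2) If, in addition, the $X_j$ are normal, then there is a single symplectic unitary $U$ such that for all $j$, \[U^{*}X_jU=\begin{bmatrix}D_j & 0\\ 0 & \overline{D_j}\end{bmatrix}\] with each $D_j$ diagonal. (3) Every symplectic unitary has determinant one.
   Context: For $X\in\mathbf{M}_{2N}(\mathbb{C})$ written in $N\times N$ blocks $X=\begin{bmatrix}A&B\\C&D\end{bmatrix}$, the dual operation is $X^{\sharp}=\begin{bmatrix}D^{\mathrm T}&-B^{\mathrm T}\\-C^{\mathrm T}&A^{\mathrm T}\end{bmatrix}$, equivalently $X^\sharp=-ZX^{\mathrm T}Z$ where $Z=\begin{bmatrix}0&I\\-I&0\end{bmatrix}$. A symplectic unitary is a unitary $U\in\mathbf{M}_{2N}(\mathbb{C})$ with $U^{\mathrm T}ZU=Z$. $\overline{M}$ denotes the entrywise complex conjugate. *)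

From HB Require Import structures.
From mathcomp Require Import all_boot all_order all_algebra.
From mathcomp Require Import reals.
From mathcomp.real_closed Require Import complex.
Set Implicit Arguments. Unset Strict Implicit. Unset Printing Implicit Defensive.
Import Order.TTheory GRing.Theory Num.Theory.
Local Open Scope ring_scope.

(* Generic over a numClosedFieldType; the statement instantiates it with R[i], R : realType (= C). *)
Section Defs.
Variable C : numClosedFieldType.

Definition mxconj m n (A : 'M[C]_(m, n)) : 'M[C]_(m, n) := map_mx (fun x => x^*) A.
Definition adjmx m n (A : 'M[C]_(m, n)) : 'M[C]_(n, m) := (mxconj A)^T.

Definition Zmx N : 'M[C]_(N + N) := block_mx 0 1%:M (- 1%:M) 0.
Definition sharp N (X : 'M[C]_(N + N)) : 'M[C]_(N + N) := - (Zmx N *m X^T *m Zmx N).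

Definition unitary_mx n (U : 'M[C]_n) : Prop := adjmx U *m U = 1%:M.
Definition symplectic_unitary N (U : 'M[C]_(N + N)) : Prop :=
  unitary_mx U /\ U^T *m Zmx N *m U = Zmx N.

Definition normal_mx n (A : 'M[C]_n) : Prop := A *m adjmx A = adjmx A *m A.

Definition upper_tri n (T : 'M[C]_n) : Prop := forall i j : 'I_n, (j < i)%N -> T i j = 0.
Definition strict_upper_tri n (S : 'M[C]_n) : Prop := forall i j : 'I_n, (j <= i)%N -> S i j = 0.
Definition diag_matrix n (D : 'M[C]_n) : Prop := forall i j : 'I_n, i != j -> D i j = 0.
End Defs.

From HB Require Import structures.
From mathcomp Require Import all_boot all_order all_algebra.
From mathcomp Require Import reals.
From mathcomp.real_closed Require Import complex.
From mathcomp Require Import spectral zify.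
Set Implicit Arguments. Unset Strict Implicit. Unset Printing Implicit Defensive.
Import Order.TTheory GRing.Theory Num.Theory.
Local Open Scope ring_scope.

(* Let J v := conj(v) Z ([qconj]) act on row vectors: J is antilinear, J (J v) = -v and
   v is always orthogonal to J v; the hypothesis X^* = X^# says exactly that X
   commutes with J.  Inductively choose q_0, q_1, ... such that the q_i and the
   J q_i together are orthonormal and each q_c is, modulo the span of the
   earlier q_i and J q_i, a common eigenvector of the matrices (here the
   adjoints of the X_j): that span is invariant, so the compressions of the
   family to its orthogonal complement commute and share an eigenvector.  The
   matrix with rows q_0, ..., J q_0, ... is unitary and commutes with J, and its
   adjoint is the required symplectic unitary.  For normal X_j the resulting
   block matrix is triangular in the order q_0, J q_0, q_1, J q_1, ..., and a
   normal triangular matrix is diagonal.  A symplectic unitary U is normal and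
   commutes with J, so det U = det D * conj (det D) >= 0, while |det U| = 1. *)

Section Conjugation.
Variable C : numClosedFieldType.
Implicit Types m n p : nat.

Lemma mxconjK m n (A : 'M[C]_(m, n)) : mxconj (mxconj A) = A.
Proof. by apply/matrixP => i j; rewrite !mxE conjCK. Qed.

Lemma mxconjM m n p (A : 'M[C]_(m, n)) (B : 'M[C]_(n, p)) :
  mxconj (A *m B) = mxconj A *m mxconj B.
Proof. exact: map_mxM. Qed.

Lemma mxconjN m n (A : 'M[C]_(m, n)) : mxconj (- A) = - mxconj A.
Proof. exact: map_mxN. Qed.

Lemma mxconj0 m n : mxconj (0 : 'M[C]_(m, n)) = 0.
Proof. exact: map_mx0. Qed.

Lemma mxconj1 n : mxconj (1%:M : 'M[C]_n) = 1%:M.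
Proof. exact: map_mx1. Qed.

Lemma mxconj_tr m n (A : 'M[C]_(m, n)) : mxconj A^T = (mxconj A)^T.
Proof. by apply/matrixP => i j; rewrite !mxE. Qed.

Lemma mxconj_col m1 m2 n (A : 'M[C]_(m1, n)) (B : 'M[C]_(m2, n)) :
  mxconj (col_mx A B) = col_mx (mxconj A) (mxconj B).
Proof. exact: map_col_mx. Qed.

Lemma det_mxconj n (A : 'M[C]_n) : \det (mxconj A) = (\det A)^*.
Proof. exact: det_map_mx. Qed.

Lemma adjmxM m n p (A : 'M[C]_(m, n)) (B : 'M[C]_(n, p)) :
  adjmx (A *m B) = adjmx B *m adjmx A.
Proof. by rewrite /adjmx mxconjM trmx_mul. Qed.

Lemma adjmxK m n (A : 'M[C]_(m, n)) : adjmx (adjmx A) = A.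
Proof. by rewrite /adjmx mxconj_tr trmxK mxconjK. Qed.

Lemma adjmx0 m n : adjmx (0 : 'M[C]_(m, n)) = 0.
Proof. by rewrite /adjmx mxconj0 trmx0. Qed.

Lemma adjmxN m n (A : 'M[C]_(m, n)) : adjmx (- A) = - adjmx A.
Proof. by rewrite /adjmx mxconjN linearN. Qed.

Lemma adjmx_col m1 m2 n (A : 'M[C]_(m1, n)) (B : 'M[C]_(m2, n)) :
  adjmx (col_mx A B) = row_mx (adjmx A) (adjmx B).
Proof. by rewrite /adjmx mxconj_col tr_col_mx. Qed.

Lemma mxconj_adj m n (A : 'M[C]_(m, n)) : mxconj (adjmx A) = A^T.
Proof. by rewrite /adjmx mxconj_tr mxconjK. Qed.

Lemma det_adjmx n (A : 'M[C]_n) : \det (adjmx A) = (\det A)^*.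
Proof. by rewrite det_tr det_mxconj. Qed.

Lemma adjmx_entry m n (A : 'M[C]_(m, n)) i j : adjmx A i j = (A j i)^*.
Proof. by rewrite !mxE. Qed.

Lemma mulmx_adj_entry m n p (A : 'M[C]_(m, n)) (B : 'M[C]_(p, n)) i j :
  (A *m adjmx B) i j = (row i A *m adjmx (row j B)) 0 0.
Proof. by rewrite !mxE; apply: eq_bigr => l _; rewrite !mxE. Qed.

Lemma orthogonal_sym m n p (A : 'M[C]_(m, n)) (B : 'M[C]_(p, n)) :
  A *m adjmx B = 0 -> B *m adjmx A = 0.
Proof. by move=> AB; rewrite -[B]adjmxK -adjmxM AB adjmx0. Qed.

Lemma orthogonal_submx m n p q (W : 'M[C]_(p, n)) (A : 'M[C]_(m, n)) (B : 'M[C]_(q, n)) :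
  (B <= W)%MS -> A *m adjmx W = 0 -> A *m adjmx B = 0.
Proof. by move=> /submxP[D ->] AW; rewrite adjmxM mulmxA AW mul0mx. Qed.

Lemma adjmxE m n (A : 'M[C]_(m, n)) : adjmx A = (A ^t Num.conj)%sesqui.
Proof. by apply/matrixP => i j; rewrite !mxE. Qed.

Lemma unitarymx_adjP m n (A : 'M[C]_(m, n)) :
  reflect (A *m adjmx A = 1%:M) (A \is unitarymx).
Proof. by rewrite adjmxE; exact: unitarymxP. Qed.

End Conjugation.

Section SymplecticForm.
Variables (C : numClosedFieldType) (N : nat).
Local Notation Z := (Zmx C N).

Lemma mxconjZmx : mxconj Z = Z.
Proof. by rewrite /Zmx /mxconj map_block_mx map_mxN map_mx0 map_mx1. Qed.

Lemma trZmx : Z^T = - Z.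
Proof.
by rewrite /Zmx tr_block_mx !trmx0 linearN /= trmx1 -[RHS]scaleN1r scale_block_mx
  !scaleN1r !oppr0 opprK.
Qed.

Lemma Zmx_sqr : Z *m Z = - 1%:M.
Proof.
rewrite /Zmx mulmx_block !(mulmx0, mul0mx, mulmx1, mul1mx, mulmxN, add0r, addr0).
by rewrite [in RHS](scalar_mx_block N N) opp_block_mx !oppr0.
Qed.

(* The complex matrices of quaternionic linear maps: those commuting with
   v |-> conj(v) Z, i.e. of the form [[A, B], [-conj B, conj A]]. *)
Definition quaternionic (X : 'M[C]_(N + N)) := mxconj X *m Z = Z *m X.

Lemma quaternionicM X Y : quaternionic X -> quaternionic Y -> quaternionic (X *m Y).
Proof. by move=> qX qY; rewrite /quaternionic mxconjM -mulmxA qY !mulmxA qX. Qed.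

Lemma quaternionic_adj X : quaternionic X -> quaternionic (adjmx X).
Proof.
move=> /(congr1 trmx); rewrite !trmx_mul trZmx mulNmx mulmxN => /oppr_inj qX.
by rewrite /quaternionic mxconj_adj -qX.
Qed.

Lemma quaternionic_sharp X : adjmx X = sharp X -> quaternionic X.
Proof.
rewrite /sharp => /(congr1 trmx); rewrite trmxK linearN /= !trmx_mul trmxK trZmx.
rewrite !mulmxN !opprK => cX.
by rewrite /quaternionic cX !mulNmx -!mulmxA Zmx_sqr !mulmxN mulmx1 opprK.
Qed.

Lemma quaternionic_block X : quaternionic X ->
  X = block_mx (ulsubmx X) (ursubmx X) (- mxconj (ursubmx X)) (mxconj (ulsubmx X)).
Proof.
have eX := esym (submxK X).
set A := ulsubmx X in eX *; set B := ursubmx X in eX *.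
set D := dlsubmx X in eX *; set E := drsubmx X in eX *.
rewrite /quaternionic eX /Zmx /mxconj map_block_mx !mulmx_block.
rewrite !(mulmx0, mul0mx, mulmx1, mul1mx, mulmxN, mulNmx, add0r, addr0).
by move=> /eq_block_mx[<- <- _ _].
Qed.

Lemma symplectic_unitary_adj P : P *m adjmx P = 1%:M -> quaternionic P ->
  symplectic_unitary (adjmx P).
Proof.
move=> Pu qP; split; first by rewrite /unitary_mx adjmxK.
by rewrite /adjmx trmxK qP -mulmxA Pu mulmx1.
Qed.

Lemma symplectic_unitary_quaternionic U : symplectic_unitary U -> quaternionic U.
Proof.
move=> [Uu UZ]; have /(congr1 trmx) := mulmx1C Uu.
rewrite trmx_mul trmx1 /adjmx trmxK => cU.
by rewrite /quaternionic -{1}UZ !mulmxA cU mul1mx.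
Qed.

End SymplecticForm.

Section OrthonormalComplement.
Variable C : numClosedFieldType.

Lemma orthonormal_complement n p (W : 'M[C]_(p, n)) : W *m adjmx W = 1%:M ->
  exists r (B : 'M[C]_(r, n)), [/\ (p + r)%N = n, B *m adjmx B = 1%:M,
    B *m adjmx W = 0 & adjmx W *m W + adjmx B *m B = 1%:M].
Proof.
move=> Wu; set K := kermx (adjmx W).
have rW : \rank W = p by apply/mxrank_unitary/unitarymx_adjP.
have pK : (p + \rank K)%N = n.
  rewrite mxrank_ker /adjmx mxrank_tr /mxconj mxrank_map rW subnKC //.
  by rewrite -rW rank_leq_col.
set B := schmidt (row_base K).
have Bu : B *m adjmx B = 1%:M.
  by apply/unitarymx_adjP/schmidt_unitarymx/rank_leq_col.
have BW : B *m adjmx W = 0.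
  apply/sub_kermxP.
  by rewrite /B (eqmx_schmidt_free (row_base_free K)) eq_row_base.
exists (\rank K), B; split => //.
have Gu : col_mx W B \is unitarymx.
  apply/unitarymx_adjP; rewrite adjmx_col mul_col_row Wu Bu BW (orthogonal_sym BW).
  by rewrite -scalar_mx_block.
have := mulmxKtV (1%:M : 'M[C]_n) Gu pK.
by rewrite mul1mx -adjmxE adjmx_col mul_row_col.
Qed.

Lemma common_eigenvector_mod n p (W : 'M[C]_(p, n)) (As : seq 'M[C]_n) :
  W *m adjmx W = 1%:M -> (p < n)%N -> {in As &, forall A B, comm_mx A B} ->
  {in As, forall A, stablemx W A} ->
  exists v : 'rV[C]_n, [/\ v *m adjmx v = 1%:M, v *m adjmx W = 0 &
    {in As, forall A, exists a, (v *m A - a *: v <= W)%MS}].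
Proof.
move=> Wu ltpn Acomm Wst.
have [r [B [pr Bu BW WB1]]] := orthonormal_complement Wu.
have BB : adjmx B *m B = 1%:M - adjmx W *m W by rewrite -WB1 (addrC (adjmx W *m W)) addrK.
pose cpr A := B *m A *m adjmx B.
have cprM A A' : A' \in As -> cpr A *m cpr A' = B *m (A *m A') *m adjmx B.
  move=> /Wst /submxP[D WA']; rewrite /cpr -!mulmxA (mulmxA (adjmx B)) BB.
  rewrite mulmxBl mul1mx !mulmxBr -(mulmxA (adjmx W)) (mulmxA W) WA'.
  by rewrite -!mulmxA (orthogonal_sym BW) !mulmx0 subr0.
have r_gt0 : (0 < r)%N by lia.
have cpr_comm : {in [seq cpr A | A <- As] &, forall A A', comm_mx A A'}.
  move=> _ _ /mapP[A AAs ->] /mapP[A' A'As ->].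
  by rewrite /comm_mx !cprM // (Acomm A A').
have [y y0 yst] := common_eigenvector r_gt0 cpr_comm.
set y1 := schmidt y.
have y1u : y1 *m adjmx y1 = 1%:M by apply/unitarymx_adjP/schmidt_unitarymx.
have y1y : (y1 :=: y)%MS.
  by apply: eqmx_schmidt_free; rewrite /row_free rank_rV y0.
exists (y1 *m B); split.
- by rewrite adjmxM mulmxA -(mulmxA y1) Bu mulmx1.
- by rewrite -mulmxA BW mulmx0.
move=> A AAs; have [a ya] : exists a, y1 *m cpr A = a *: y1.
  apply/sub_rVP; rewrite (eqmxMr _ y1y) y1y.
  by move/allP: yst; apply; apply/mapP; exists A.
exists a; rewrite -{1}[y1 *m B *m A]mulmx1 -WB1 mulmxDr.
have -> : y1 *m B *m A *m (adjmx B *m B) = a *: (y1 *m B).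
  by rewrite !mulmxA -(mulmxA y1) -(mulmxA y1) ya scalemxAl.
by rewrite addrK !mulmxA submxMl.
Qed.

End OrthonormalComplement.

Section QuaternionicFrame.
Variables (C : numClosedFieldType) (N : nat).
Local Notation n := (N + N).
Local Notation Z := (Zmx C N).
Implicit Types (m p : nat) (q : nat -> 'rV[C]_n).

Definition qconj m (A : 'M[C]_(m, n)) := mxconj A *m Z.

Lemma qconjM m p (K : 'M[C]_(m, p)) (A : 'M[C]_(p, n)) :
  qconj (K *m A) = mxconj K *m qconj A.
Proof. by rewrite /qconj mxconjM mulmxA. Qed.

Lemma qconjMr m (A : 'M[C]_(m, n)) X : quaternionic X -> qconj (A *m X) = qconj A *m X.
Proof. by move=> qX; rewrite /qconj mxconjM -mulmxA qX mulmxA. Qed.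

Lemma qconj_qconj m (A : 'M[C]_(m, n)) : qconj (qconj A) = - A.
Proof. by rewrite /qconj mxconjM mxconjK mxconjZmx -mulmxA Zmx_sqr mulmxN mulmx1. Qed.

Lemma qconj_col m1 m2 (A : 'M[C]_(m1, n)) (B : 'M[C]_(m2, n)) :
  qconj (col_mx A B) = col_mx (qconj A) (qconj B).
Proof. by rewrite /qconj mxconj_col mul_col_mx. Qed.

Lemma row_qconj m (A : 'M[C]_(m, n)) i : row i (qconj A) = qconj (row i A).
Proof. by rewrite /qconj row_mul; congr (_ *m _); apply/rowP => j; rewrite !mxE. Qed.

Lemma adj_qconj m (A : 'M[C]_(m, n)) : adjmx (qconj A) = - Z *m A^T.
Proof. by rewrite adjmxM /adjmx mxconjZmx trZmx mxconjK. Qed.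

Lemma mul_adj_qconjC m p (A : 'M[C]_(m, n)) (B : 'M[C]_(p, n)) :
  A *m adjmx (qconj B) = - (B *m adjmx (qconj A))^T.
Proof.
rewrite !adj_qconj !mulNmx !mulmxN linearN /= opprK !trmx_mul trmxK trZmx.
by rewrite mulmxN mulNmx mulmxA.
Qed.

Lemma qconj_orthogonal_self (v : 'rV[C]_n) : v *m adjmx (qconj v) = 0.
Proof.
have /eqP := mul_adj_qconjC v v.
rewrite (_ : _^T = v *m adjmx (qconj v)); last by apply/matrixP => i j; rewrite !ord1 mxE.
by rewrite -addr_eq0 -mulr2n -scaler_nat scaler_eq0 pnatr_eq0 => /eqP.
Qed.

Lemma mul_qconj_adj_qconj m p (A : 'M[C]_(m, n)) (B : 'M[C]_(p, n)) :
  qconj A *m adjmx (qconj B) = mxconj (A *m adjmx B).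
Proof.
rewrite adj_qconj /qconj mulNmx mulmxN mulmxA -(mulmxA _ Z Z) Zmx_sqr.
by rewrite mulmxN mulmx1 mulNmx opprK mxconjM mxconj_adj.
Qed.

Definition symp_frame m q : 'M[C]_(m + m, n) :=
  col_mx (\matrix_(i < m) q i) (qconj (\matrix_(i < m) q i)).

Lemma row_frame_l m q (i : 'I_m) : row (lshift m i) (symp_frame m q) = q i.
Proof. by rewrite rowKu rowK. Qed.

Lemma row_frame_r m q (i : 'I_m) : row (rshift m i) (symp_frame m q) = qconj (q i).
Proof. by rewrite rowKd row_qconj rowK. Qed.

Lemma vec_sub_frame m q i : (i < m)%N -> (q i <= symp_frame m q)%MS.
Proof. by move=> im; rewrite -(row_frame_l q (Ordinal im)) row_sub. Qed.

Lemma qconj_vec_sub_frame m q i : (i < m)%N -> (qconj (q i) <= symp_frame m q)%MS.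
Proof. by move=> im; rewrite -(row_frame_r q (Ordinal im)) row_sub. Qed.

Lemma frame_sub m m' q : (m <= m')%N -> (symp_frame m q <= symp_frame m' q)%MS.
Proof.
move=> le_mm'; apply/row_subP => r; case: (split_ordP r) => i ->.
  by rewrite row_frame_l vec_sub_frame // (leq_trans (ltn_ord i)).
by rewrite row_frame_r qconj_vec_sub_frame // (leq_trans (ltn_ord i)).
Qed.

Lemma eq_frame m q q' : (forall i, (i < m)%N -> q i = q' i) ->
  symp_frame m q = symp_frame m q'.
Proof.
move=> qq'; rewrite /symp_frame (_ : \matrix_(i < m) q i = \matrix_(i < m) q' i) //.
by apply/row_matrixP => i; rewrite !rowK qq'.
Qed.

Lemma qconj_frame m q : qconj (symp_frame m q) = Zmx C m *m symp_frame m q.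
Proof.
rewrite /symp_frame qconj_col qconj_qconj /Zmx mul_block_col.
by rewrite !(mul0mx, mul1mx, mulNmx, add0r, addr0).
Qed.

Lemma frame_quaternionic q : quaternionic (symp_frame N q).
Proof. exact: qconj_frame. Qed.

Lemma qconj_sub_frame m q p (A : 'M[C]_(p, n)) :
  (A <= symp_frame m q)%MS -> (qconj A <= symp_frame m q)%MS.
Proof. by move=> /submxP[D ->]; rewrite qconjM qconj_frame mulmxA submxMl. Qed.

Lemma frame_orthogonal m q p (A : 'M[C]_(p, n)) :
  (forall i, (i < m)%N -> A *m adjmx (q i) = 0 /\ A *m adjmx (qconj (q i)) = 0) ->
  A *m adjmx (symp_frame m q) = 0.
Proof.
move=> Aq; apply/orthogonal_sym/row_matrixP => r; rewrite row_mul row0.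
apply: orthogonal_sym; case: (split_ordP r) => i ->.
  by rewrite row_frame_l; case: (Aq i (ltn_ord i)).
by rewrite row_frame_r; case: (Aq i (ltn_ord i)).
Qed.

Lemma qconj_orthogonal_frame m q p (A : 'M[C]_(p, n)) :
  A *m adjmx (symp_frame m q) = 0 -> qconj A *m adjmx (symp_frame m q) = 0.
Proof.
move=> AW; have := mul_qconj_adj_qconj A (qconj (symp_frame m q)).
rewrite qconj_qconj (orthogonal_submx (qconj_sub_frame (submx_refl _)) AW).
by rewrite mxconj0 adjmxN mulmxN => /eqP; rewrite oppr_eq0 => /eqP.
Qed.

Definition symp_orthonormal m q := forall i j, (i < m)%N -> (j < m)%N ->
  q i *m adjmx (q j) = (i == j)%:R%:M /\ q i *m adjmx (qconj (q j)) = 0.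

Lemma frame_unitary m q : symp_orthonormal m q ->
  symp_frame m q *m adjmx (symp_frame m q) = 1%:M.
Proof.
move=> qo; set Q := \matrix_(i < m) q i.
have QQ : Q *m adjmx Q = 1%:M.
  apply/matrixP => a b; rewrite mulmx_adj_entry !rowK.
  by have [-> _] := qo a b (ltn_ord a) (ltn_ord b); rewrite !mxE.
have QJ : Q *m adjmx (qconj Q) = 0.
  apply/matrixP => a b; rewrite mulmx_adj_entry row_qconj !rowK.
  by have [_ ->] := qo a b (ltn_ord a) (ltn_ord b); rewrite !mxE.
rewrite /symp_frame adjmx_col mul_col_row QQ QJ mul_qconj_adj_qconj QQ mxconj1.
by rewrite (orthogonal_sym QJ) [RHS](scalar_mx_block m m).
Qed.

Definition extend q m (v : 'rV[C]_n) : nat -> 'rV[C]_n :=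
  fun i => if i == m then v else q i.

Lemma orthonormal_extend m q v : symp_orthonormal m q -> v *m adjmx v = 1%:M ->
  v *m adjmx (symp_frame m q) = 0 -> symp_orthonormal m.+1 (extend q m v).
Proof.
move=> qo vv vW.
have vq i : (i < m)%N -> v *m adjmx (q i) = 0 /\ v *m adjmx (qconj (q i)) = 0.
  by move=> im; split; apply: (orthogonal_submx _ vW);
    [apply: vec_sub_frame | apply: qconj_vec_sub_frame].
have Jvq i : (i < m)%N -> qconj v *m adjmx (q i) = 0.
  by move=> im; apply: (orthogonal_submx _ (qconj_orthogonal_frame vW)); apply: vec_sub_frame.
have ltnSE k : (k < m.+1)%N -> k = m \/ (k < m)%N by rewrite ltnS leq_eqVlt => /predU1P.
move=> i j /ltnSE[-> | im] /ltnSE[-> | jm]; rewrite /extend ?eqxx ?(ltn_eqF im) ?(ltn_eqF jm).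
- by rewrite vv qconj_orthogonal_self.
- by rewrite (gtn_eqF jm) raddf0; case: (vq j jm).
- by rewrite raddf0; split; apply: orthogonal_sym; [case: (vq i im) | apply: Jvq].
- exact: qo.
Qed.

End QuaternionicFrame.

Section Flag.
Variables (C : numClosedFieldType) (N k : nat) (Y : 'I_k -> 'M[C]_(N + N)).
Hypothesis Ycomm : forall j l, Y j *m Y l = Y l *m Y j.
Hypothesis Yquat : forall j, quaternionic (Y j).
Local Notation n := (N + N).
Implicit Types (m : nat) (q : nat -> 'rV[C]_n).

Definition symp_flag m q := forall j c, (c < m)%N ->
  exists a, (q c *m Y j - a *: q c <= symp_frame c q)%MS.

Lemma flag_stable m q j : symp_flag m q -> stablemx (symp_frame m q) (Y j).
Proof.
move=> qf; have qY c : (c < m)%N -> (q c *m Y j <= symp_frame m q)%MS.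
  move=> cm; have [a qa] := qf j c cm.
  rewrite -(subrK (a *: q c) (q c *m Y j)) addmx_sub ?scalemx_sub ?vec_sub_frame //.
  exact: submx_trans qa (frame_sub _ (ltnW cm)).
apply/row_subP => r; rewrite row_mul; case: (split_ordP r) => c ->.
  by rewrite row_frame_l qY.
by rewrite row_frame_r -qconjMr // qconj_sub_frame ?qY.
Qed.

Lemma flag_orthogonal m q j c (v : 'rV[C]_n) : symp_flag m q -> (c < m)%N ->
  v *m adjmx (symp_frame c q) = 0 -> v *m adjmx (q c) = 0 ->
  q c *m Y j *m adjmx v = 0.
Proof.
move=> qf cm vW vq; have [a qa] := qf j c cm.
rewrite -(subrK (a *: q c) (q c *m Y j)) mulmxDl -scalemxAl (orthogonal_sym vq).
by rewrite scaler0 addr0 (orthogonal_sym (orthogonal_submx qa vW)).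
Qed.

Lemma flag_extend m q : symp_orthonormal m q -> symp_flag m q -> (m < N)%N ->
  exists q', symp_orthonormal m.+1 q' /\ symp_flag m.+1 q'.
Proof.
move=> qo qf ltmN; pose Ys := [seq Y j | j <- enum 'I_k].
have ltmn : (m + m < n)%N by lia.
have Ys_comm : {in Ys &, forall A B, comm_mx A B}.
  by move=> _ _ /mapP[j _ ->] /mapP[l _ ->]; apply: Ycomm.
have Ys_stable : {in Ys, forall A, stablemx (symp_frame m q) A}.
  by move=> _ /mapP[j _ ->]; apply: flag_stable.
have [v [vv vW vY]] := common_eigenvector_mod (frame_unitary qo) ltmn Ys_comm Ys_stable.
exists (extend q m v); split; first exact: orthonormal_extend.
have frame_ext c : (c <= m)%N -> symp_frame c (extend q m v) = symp_frame c q.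
  by move=> cm; apply: eq_frame => i ic; rewrite /extend ltn_eqF // (leq_trans ic cm).
move=> j c; rewrite ltnS leq_eqVlt => /predU1P[-> | cm].
  rewrite frame_ext // /extend eqxx; apply: vY.
  by apply/mapP; exists j; rewrite ?mem_enum.
by rewrite frame_ext ?(ltnW cm) // /extend (ltn_eqF cm); apply: qf.
Qed.

Lemma flag_exists : exists q, symp_orthonormal N q /\ symp_flag N q.
Proof.
suff flag_le m : (m <= N)%N -> exists q, symp_orthonormal m q /\ symp_flag m q.
  exact: flag_le.
elim: m => [_ | m IH ltmN]; first by exists (fun=> 0); split.
have [q [qo qf]] := IH (ltnW ltmN); exact: flag_extend qo qf ltmN.
Qed.

Lemma frame_entries q j : symp_orthonormal N q -> symp_flag N q ->
  let M := symp_frame N q *m Y j *m adjmx (symp_frame N q) in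
  (forall c i : 'I_N, (c < i)%N -> M (lshift N c) (lshift N i) = 0) /\
  (forall c i : 'I_N, (c <= i)%N -> M (lshift N c) (rshift N i) = 0).
Proof.
move=> qo qf M.
have qperp c i : (c <= i)%N -> (i < N)%N ->
    q i *m adjmx (symp_frame c q) = 0 /\ qconj (q i) *m adjmx (symp_frame c q) = 0.
  move=> ci iN; suff qiW : q i *m adjmx (symp_frame c q) = 0.
    by split; last exact: qconj_orthogonal_frame.
  apply: frame_orthogonal => l lc; have li := leq_trans lc ci.
  by have [-> ->] := qo i l iN (ltn_trans li iN); rewrite (gtn_eqF li) raddf0.
split=> c i ci; rewrite mulmx_adj_entry row_mul !row_frame_l ?row_frame_r.
- rewrite (flag_orthogonal _ qf) ?mxE //; first by case: (qperp c i (ltnW ci)).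
  by have [-> _] := qo i c (ltn_ord i) (ltn_ord c); rewrite (gtn_eqF ci) raddf0.
- rewrite (flag_orthogonal _ qf) ?mxE //; first by case: (qperp c i ci).
  by have [_ /orthogonal_sym] := qo c i (ltn_ord c) (ltn_ord i).
Qed.

End Flag.

Lemma quaternionic_schur (C : numClosedFieldType) N k (X : 'I_k -> 'M[C]_(N + N)) :
  (forall j l, X j *m X l = X l *m X j) -> (forall j, quaternionic (X j)) ->
  exists U : 'M[C]_(N + N), symplectic_unitary U /\
    forall j, exists (T S : 'M[C]_N),
      [/\ upper_tri T, strict_upper_tri S &
          adjmx U *m X j *m U = block_mx T S (- mxconj S) (mxconj T)].
Proof.
(* A flag of row vectors makes [P *m Y j *m adjmx P] lower triangular, so it is
   built for the adjoints. *)
move=> Xcomm Xquat; pose Y j := adjmx (X j).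
have Ycomm j l : Y j *m Y l = Y l *m Y j by rewrite -!adjmxM Xcomm.
have Yquat j : quaternionic (Y j) by apply: quaternionic_adj.
have [q [qo qf]] := flag_exists Ycomm Yquat.
have Pq := frame_quaternionic q; set P := symp_frame N q in Pq *.
exists (adjmx P); split; first exact: symplectic_unitary_adj (frame_unitary qo) Pq.
move=> j; set M := _ *m X j *m _.
have MY : M = adjmx (P *m Y j *m adjmx P) by rewrite /M /Y !adjmxM !adjmxK !mulmxA.
have Mq : quaternionic M.
  by rewrite /M adjmxK; apply: quaternionicM (quaternionic_adj Pq); apply: quaternionicM.
have [tri_ll tri_lr] := frame_entries j qo qf.
have UR : ursubmx M = - mxconj (dlsubmx M).
  by rewrite {2}(quaternionic_block Mq) block_mxKdl mxconjN mxconjK opprK.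
exists (ulsubmx M), (ursubmx M); split; last exact: quaternionic_block.
- by move=> c i ic; rewrite 2!mxE MY adjmx_entry tri_ll ?conjC0.
- by move=> c i ic; rewrite UR 4!mxE MY adjmx_entry tri_lr ?conjC0 ?oppr0.
Qed.

Lemma normal_tri_diag (C : numClosedFieldType) n (M : 'M[C]_n) (rk : 'I_n -> nat) :
  injective rk -> (forall a b, (rk b < rk a)%N -> M a b = 0) -> normal_mx M ->
  forall a b, a != b -> M a b = 0.
Proof.
move=> rk_inj tri nM.
suff offdiag K a : (rk a < K)%N -> forall b, b != a -> M b a = 0 /\ M a b = 0.
  move=> a b ab; have ba : b != a by rewrite eq_sym.
  by have [] := offdiag (rk a).+1 a (ltnSn _) b ba.
elim: K a => [//|K IH] a aK.
have col b : b != a -> M b a = 0.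
  move=> ba; case: (ltngtP (rk a) (rk b)) => [/tri //|lt_ba|/rk_inj eq_ab].
  - by have [] := IH b (leq_trans lt_ba aK) a; rewrite // eq_sym.
  - by rewrite eq_ab eqxx in ba.
move=> b ba; split; first exact: col.
have /matrixP/(_ a a) := nM; rewrite !mxE (bigD1 a) //= [in RHS](bigD1 a) //=.
rewrite [in RHS]big1 => [|l la]; last by rewrite !mxE col // conjC0 mul0r.
rewrite !mxE addr0 (mulrC (M a a)^*) -[RHS]addr0 => /addrI rowa0.
have rowa_ge0 l : l != a -> 0 <= M a l * adjmx M l a.
  by move=> _; rewrite adjmx_entry mul_conjC_ge0.
by have /eqP := psumr_eq0P rowa_ge0 rowa0 ba; rewrite adjmx_entry mul_conjC_eq0 => /eqP.
Qed.

Lemma normal_unitary_conj (C : numClosedFieldType) n (U A : 'M[C]_n) :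
  unitary_mx U -> normal_mx A -> normal_mx (adjmx U *m A *m U).
Proof.
move=> Uu nA; have UU : U *m adjmx U = 1%:M by apply: mulmx1C.
rewrite /normal_mx !adjmxM adjmxK !mulmxA -!(mulmxA _ U (adjmx U)) UU !mulmx1.
by rewrite -(mulmxA _ A) nA mulmxA.
Qed.

Definition interleave N (a : 'I_(N + N)) : nat :=
  if (a < N)%N then (2 * a)%N else (2 * (a - N)).+1.

Lemma interleave_inj N : injective (@interleave N).
Proof.
move=> a b; rewrite /interleave => e; apply: val_inj => /=.
by case: ifP e => ha; case: ifP => hb; lia.
Qed.

Lemma quat_block_interleave_tri (C : numClosedFieldType) N (T S : 'M[C]_N) :
  upper_tri T -> strict_upper_tri S ->
  forall a b, (interleave b < interleave a)%N ->
    block_mx T S (- mxconj S) (mxconj T) a b = 0.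
Proof.
have ilL (i : 'I_N) : interleave (lshift N i) = (2 * i)%N by rewrite /interleave /= ltn_ord.
have ilR (i : 'I_N) : interleave (rshift N i) = (2 * i).+1.
  by rewrite /interleave /= ltnNge leq_addr /= addKn.
move=> Tu Su a b; case: (split_ordP a) => i ->; case: (split_ordP b) => c ->;
  rewrite ?ilL ?ilR => lt_ba.
- by rewrite block_mxEul Tu //; lia.
- by rewrite block_mxEur Su //; lia.
- by rewrite block_mxEdl !mxE Su ?conjC0 ?oppr0 //; lia.
- by rewrite block_mxEdr mxE Tu ?conjC0 //; lia.
Qed.

Lemma quaternionic_diag (C : numClosedFieldType) N k (X : 'I_k -> 'M[C]_(N + N)) :
  (forall j l, X j *m X l = X l *m X j) -> (forall j, quaternionic (X j)) ->
  (forall j, normal_mx (X j)) ->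
  exists U : 'M[C]_(N + N), symplectic_unitary U /\
    forall j, exists D : 'M[C]_N,
      diag_matrix D /\ adjmx U *m X j *m U = block_mx D 0 0 (mxconj D).
Proof.
move=> Xcomm Xquat Xnormal; have [U [[Uu UZ] HU]] := quaternionic_schur Xcomm Xquat.
exists U; split => // j; have [T [S [Tu Su eM]]] := HU j.
have nM := normal_unitary_conj Uu (Xnormal j); rewrite eM in nM.
have offdiag := normal_tri_diag (@interleave_inj N) (quat_block_interleave_tri Tu Su) nM.
have S0 : S = 0.
  apply/matrixP => i c; have := offdiag (lshift N i) (rshift N c).
  by rewrite eq_lrshift block_mxEur mxE; apply.
exists T; split; last by rewrite eM S0 mxconj0 oppr0.
move=> i c ic; have := offdiag (lshift N i) (lshift N c).
by rewrite eq_lshift block_mxEul; apply.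
Qed.

Lemma symplectic_unitary_det (C : numClosedFieldType) N (U : 'M[C]_(N + N)) :
  symplectic_unitary U -> \det U = 1.
Proof.
move=> sU; have [Uu _] := sU.
have [V [[Vu _] HV]] := quaternionic_diag (X := fun _ : 'I_1 => U) (fun _ _ => erefl)
  (fun _ => symplectic_unitary_quaternionic sU) (fun _ => etrans (mulmx1C Uu) (esym Uu)).
have [D [_ eV]] := HV ord0.
have det_unitary W : unitary_mx W -> (\det W)^* * \det W = 1.
  by move=> Wu; rewrite -det_adjmx -det_mulmx Wu det1.
have := congr1 determinant eV.
rewrite det_ublock !det_mulmx det_mxconj det_adjmx mulrAC det_unitary // mul1r => dU.
set x := \det D * (\det D)^* in dU.
have x_ge0 : 0 <= x by exact: mul_conjC_ge0.
have /eqP : x ^+ 2 = 1 by rewrite expr2 -{1}(geC0_conj x_ge0) -dU det_unitary.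
rewrite dU sqrf_eq1 => /orP[/eqP // | /eqP x_m1].
by move: x_ge0; rewrite x_m1 oppr_ge0 ler10.
Qed.

Theorem mainTheorem1 (R : realType) (N k : nat) (X : 'I_k -> 'M[R[i]]_(N + N)) :
  (forall j l : 'I_k, X j *m X l = X l *m X j) ->
  (forall j : 'I_k, adjmx (X j) = sharp (X j)) ->
  [/\ (exists U : 'M[R[i]]_(N + N), symplectic_unitary U /\
         forall j : 'I_k, exists (T S : 'M[R[i]]_N),
           [/\ upper_tri T, strict_upper_tri S &
               adjmx U *m X j *m U = block_mx T S (- mxconj S) (mxconj T)]),
      ((forall j : 'I_k, normal_mx (X j)) ->
       exists U : 'M[R[i]]_(N + N), symplectic_unitary U /\
         forall j : 'I_k, exists D : 'M[R[i]]_N,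
           diag_matrix D /\ adjmx U *m X j *m U = block_mx D 0 0 (mxconj D))
    & forall U : 'M[R[i]]_(N + N), symplectic_unitary U -> \det U = 1].
Proof.
move=> Xcomm Xsharp; have Xquat j := quaternionic_sharp (Xsharp j).
split.
- exact: quaternionic_schur.
- exact: quaternionic_diag.
- exact: symplectic_unitary_det.
Qed.
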